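(* Let $G=(V,E)$ be a finite, undirected, unweighted, connected graph, let $P=(v_{i_1},\dots,v_{i_k})$ be a shortest walk in $G$ visiting every vertex at least once, and let $\ell\ge1$. The CNOT cost of the circuit applying the quantum hashing algorithm $\ell$ times with the path strategy (described in the context) is at most $(3k-4)\ell+2$.
   Context: A walk is a sequence of vertices with consecutive entries adjacent (repetitions allowed); its length is the number of entries. Each vertex carries one physical qubit; two-qubit gates only act on qubits at adjacent vertices. $CR_y(\xi)=\mathrm{diag}(I,R_y(\xi))$; SWAP exchanges two qubits. Single application along a walk $(x_1,\dots,x_k)$: target starts on $x_2$; $U=\emptyset$; apply $CR_y$ (control $x_1$, target $x_2$), add $x_1$ to $U$, $j=2$; loop: if $x_{j+1}\notin U$ apply $CR_y$ (control $x_{j+1}$, target $x_j$) and add $x_{j+1}$ to $U$; if $j=k-1$ stop; else if $x_{j+2}=x_j$ set $j\leftarrow j+2$, otherwise apply SWAP to $x_j,x_{j+1}$ and set $j\leftarrow j+1$; repeat. Path strategy: the applications alternately use $P$ and its reversal $(v_{i_k},\dots,v_{i_1})$; the last $CR_y$ of one application and the first $CR_y$ of the next act on the same control/target pair and are merged into a single $CR_y$ gate. CNOT cost: number of CNOTs after decomposition, counting each $CR_y$ as 2, each SWAP as 3, a $CR_y$ immediately followed by a SWAP on the same two qubits as 3 in total, single-qubit gates as 0. *)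

From mathcomp Require Import all_boot.
Set Implicit Arguments. Unset Strict Implicit. Unset Printing Implicit Defensive.

Section Graphs.
Variable T : finType.

(** Graph: a symmetric irreflexive relation [e] on the finite vertex type [T]. *)

Definition walk (e : rel T) (s : seq T) : bool :=
  if s is x :: s' then path e x s' else false.

Definition covering (s : seq T) : Prop := forall v : T, v \in s.

(** A shortest covering walk (length = number of entries = size). *)
Definition shortest_covering_walk (e : rel T) (P : seq T) : Prop :=
  [/\ walk e P, covering P &
      forall Q : seq T, walk e Q -> covering Q -> size P <= size Q].

End Graphs.

Section Circuits.
Variable T : eqType.

(** Gates, acting on (qubits at) vertices. *)
Inductive gate : Type :=
| CRy of T & T     (* CRy control target *)
| SWAP of T & T.

(** Single application along a walk s = (x_1,...,x_k).
    X i is x_i (1-based). The loop is run with fuel; it stops when j = k-1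
    (and, as a convention for degenerate walks, whenever j >= k). *)
Fixpoint app_loop (X : nat -> T) (k : nat) (fuel : nat) (U : seq T) (j : nat)
  : seq gate :=
  match fuel with
  | 0 => [::]
  | fuel'.+1 =>
    if k <= j then [::] else
    let xj := X j in
    let xj1 := X j.+1 in
    let new := xj1 \notin U in
    let U' := if new then xj1 :: U else U in
    (if new then [:: CRy xj1 xj] else [::]) ++
    (if j == k.-1 then [::]
     else if X j.+2 == xj then app_loop X k fuel' U' j.+2
     else SWAP xj xj1 :: app_loop X k fuel' U' j.+1)
  end.

Definition application (s : seq T) : seq gate :=
  match s with
  | x1 :: x2 :: _ =>
      let X := fun i => nth x1 s i.-1 in
      CRy x1 x2 :: app_loop X (size s) (size s) [:: x1] 2
  | _ => [::]
  end.

Definition last_gate (A : seq gate) : option gate :=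
  if A is g :: A' then Some (last g A') else None.

Definition merge (A B : seq gate) : seq gate :=
  match B with
  | CRy c t :: B' =>
      match last_gate A with
      | Some (CRy c' t') => if (c' == c) && (t' == t) then A ++ B' else A ++ B
      | _ => A ++ B
      end
  | _ => A ++ B
  end.

Definition path_strategy (P : seq T) (l : nat) : seq gate :=
  foldl merge [::]
    [seq application (if odd i then rev P else P) | i <- iota 0 l].

Fixpoint cnot_cost (gs : seq gate) : nat :=
  match gs with
  | [::] => 0
  | CRy c t :: rest =>
      match rest with
      | SWAP a b :: rest' =>
          if ((a == c) && (b == t)) || ((a == t) && (b == c))
          then 3 + cnot_cost rest'
          else 2 + cnot_cost rest
      | _ => 2 + cnot_cost rest
      end
  | SWAP _ _ :: rest => 3 + cnot_cost rest
  end.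

End Circuits.

From Pilot Require Import Defs.
From mathcomp Require Import all_boot.
From mathcomp Require Import zify.

(* An application along a walk of k entries opens with a CRy (2 CNOTs); each
   later loop step costs at most 3 -- a SWAP, fused with the CRy before it on
   the same pair, or a lone CRy covering a double step -- and the final step at
   most 2, so an application costs at most 3k - 4.  Since merging only deletes
   a CRy, the cost of the merged circuit is at most the sum of the costs of
   the l applications. *)

Section CnotCost.
Variable T : eqType.
Implicit Types (A B : seq (gate T)) (c t : T).

Lemma cnot_cost_CRy_le c t A : cnot_cost (CRy c t :: A) <= 2 + cnot_cost A.
Proof. by case: A => [|[c' t'|a b] A] /=; try case: ifP => _ /=; lia. Qed.

Lemma cnot_cost_CRy_ge c t A : cnot_cost A <= cnot_cost (CRy c t :: A).
Proof. by case: A => [|[c' t'|a b] A] /=; try case: ifP => _ /=; lia. Qed.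

Lemma cnot_cost_cat A B : cnot_cost (A ++ B) <= cnot_cost A + cnot_cost B.
Proof.
(* strong induction: a fused CRy-SWAP pair consumes two gates at once *)
elim: {A}(size A).+1 {-2}A (ltnSn (size A)) => // n IH.
case=> [|[c t|a b] A] //= ltAn; last by have := IH A ltAn; lia.
case: A ltAn => [|[c' t'|a b] A] ltAn /=.
- exact: cnot_cost_CRy_le.
- by have := IH (CRy c' t' :: A) ltAn; rewrite /=; lia.
- case: ifP => _.
    by have := IH A (ltnW ltAn); lia.
  by have := IH (SWAP a b :: A) ltAn; rewrite /=; lia.
Qed.

Lemma cnot_cost_merge A B :
  cnot_cost (Defs.merge A B) <= cnot_cost A + cnot_cost B.
Proof.
rewrite /Defs.merge; case: B => [|[c t|a b] B]; try exact: cnot_cost_cat.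
case: (last_gate A) => [[c' t'|a b]|]; try exact: cnot_cost_cat.
case: ifP => _; last exact: cnot_cost_cat.
by have := cnot_cost_cat A B; have := cnot_cost_CRy_ge c t B; lia.
Qed.

Lemma cnot_cost_foldl_merge A (Bs : seq (seq (gate T))) :
  cnot_cost (foldl (@Defs.merge T) A Bs) <=
  cnot_cost A + sumn (map (@cnot_cost T) Bs).
Proof.
elim: Bs A => [|B Bs IH] A /=; first by rewrite addn0.
by have := IH (Defs.merge A B); have := cnot_cost_merge A B; lia.
Qed.

Lemma cnot_cost_app_loop X k fuel (U : seq T) j :
  cnot_cost (app_loop X k fuel U j) <= 3 * (k.-1 - j) + 2.
Proof.
elim: fuel U j => [|fuel IH] U j //=.
case: ifP => // ltjk.
have [lastj | notlastj] := eqVneq j k.-1.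
  by case: (X j.+1 \notin U) => /=; lia.
have ltj : j < k.-1 by lia.
case: (X j.+1 \notin U); rewrite ?cat1s ?cat0s; case: ifP => _.
- apply: leq_trans (cnot_cost_CRy_le _ _ _) _.
  by have := IH (X j.+1 :: U) j.+2; lia.
- by rewrite /= !eqxx orbT; have := IH (X j.+1 :: U) j.+1; lia.
- by have := IH U j.+2; lia.
- by have := IH U j.+1; rewrite /=; lia.
Qed.

Lemma cnot_cost_application (s : seq T) :
  cnot_cost (application s) <= 3 * size s - 4.
Proof.
case: s => [|x1 [|x2 [|x3 s]]] //.
rewrite /application; set loop := app_loop _ _ _ _ _.
have := cnot_cost_app_loop (fun i => nth x1 [:: x1, x2, x3 & s] i.-1)
  (size s).+3 (size s).+3 [:: x1] 2.
have := cnot_cost_CRy_le x1 x2 loop.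
rewrite -/loop /=; lia.
Qed.

Lemma cnot_cost_path_strategy (P : seq T) l :
  cnot_cost (path_strategy P l) <= (3 * size P - 4) * l.
Proof.
apply: leq_trans (cnot_cost_foldl_merge _ _) _.
rewrite add0n -[in X in _ <= _ * X](size_iota 0 l).
elim: (iota 0 l) => [|i r IH] //=.
rewrite mulnS leq_add //; case: (odd i) => //.
  by rewrite -(size_rev P) cnot_cost_application.
exact: cnot_cost_application.
Qed.

End CnotCost.

(* The bound holds for every sequence P and every l. *)
Theorem theorem4 (T : finType) (e : rel T) (P : seq T) (l : nat) :
  symmetric e -> irreflexive e -> (forall x y : T, connect e x y) ->
  1 < #|T| ->
  shortest_covering_walk e P -> 1 <= l ->
  cnot_cost (path_strategy P l) <= (3 * size P - 4) * l + 2.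
Proof.
move=> _ _ _ _ _ _.
by apply: leq_trans (leq_addr 2 _); apply: cnot_cost_path_strategy.
Qed.
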